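(* Let $(X,d)$ be a compact metric space and $\mathcal{W}$ a uniformly bounded open cover of $X$. Let $\mu=\sum_{i=1}^nm_i\delta_{x_i}\in\mathrm{Viet}^{\mathrm{m}}(\mathcal{W})$ (distinct $x_i$, $m_i>0$), let $\mathcal{U}=\{U_1,\dots,U_n\}$ be pairwise disjoint open subsets of $X$ with $x_i\in U_i$ and $\bigcup_iU_i$ contained in an element of $\mathcal{W}$, let $\varepsilon>0$, and let $B(\mu)=\tilde B(\mu)\cap\mathrm{Viet}^{\mathrm{m}}(\mathcal{W})$ where $\tilde B(\mu)$ is an open ball centered at $\mu$ in $P(X)$ with respect to the Wasserstein metric. Define the multivalued map $F\colon P_{\mathcal{U}}\cap B(\mu)\to P(X)$ by $F(\zeta)=\{\nu\in P(\mu,\mathcal{U},\varepsilon) : \mathrm{supp}(\nu)\subseteq\mathrm{supp}(\zeta)\}$. Then for every $\zeta\in P_{\mathcal{U}}\cap B(\mu)$, the set $F(\zeta)$ is non-empty, convex, and closed.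
   Context: $P(X)$ is the space of Borel probability measures on $X$ (with the weak topology, equivalently the Wasserstein metric since $X$ is compact). $\mathrm{Viet}^{\mathrm{m}}(\mathcal{W})\subseteq P(X)$ is the set of finitely supported probability measures whose support is contained in some element of $\mathcal{W}$. For finitely supported $\nu=\sum_jw_j\delta_{a_j}$ and $Y\subseteq X$, $\nu(Y)=\sum_{a_j\in Y}w_j$. $P_U=\{\nu\in\mathrm{Viet}^{\mathrm{m}}(\mathcal{W}):\mathrm{supp}(\nu)\cap U\ne\varnothing\}$, $P_{\mathcal{U}}=\bigcap_iP_{U_i}$, and $P(\mu,\mathcal{U},\varepsilon)=\{\nu\in\mathrm{Viet}^{\mathrm{m}}(\mathcal{W}) : \mathrm{supp}(\nu)\subseteq\bigcup_iU_i,\ |\nu(U_i)-\mu(U_i)|\le\varepsilon\ \forall i\}$. *)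

From HB Require Import structures.
From mathcomp Require Import all_boot all_order all_algebra.
From mathcomp Require Import all_classical all_reals all_analysis.
Set Implicit Arguments. Unset Strict Implicit. Unset Printing Implicit Defensive.
Import Order.TTheory GRing.Theory Num.Theory.
Import numFieldNormedType.Exports.
Local Open Scope classical_set_scope.
Local Open Scope ring_scope.

(** metric spaces with a distinguished point (i.e. non-empty metric spaces);
    the point is only needed to build the Borel measurable structure. *)
#[short(type="pmetricType")]
HB.structure Definition PointedMetric (K : numDomainType) :=
  { M of Metric K M & Pointed M }.

Section Defs.
Context {R : realType} {X : pmetricType R}.

Definition Borel : measurableType _ := g_sigma_algebraType (@open X).

Definition PX := probability Borel R.

Definition supp (nu : PX) : set X :=
  [set y | forall V : set X, open V -> V y -> (0 < nu V)%E].

Definition fin_supported (nu : PX) : Prop :=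
  exists S : set X, finite_set S /\ nu S = 1%E.

Definition VietM (W : set (set X)) (nu : PX) : Prop :=
  fin_supported nu /\ exists A, W A /\ supp nu `<=` A.

Definition P_one (W : set (set X)) (V : set X) (nu : PX) : Prop :=
  VietM W nu /\ supp nu `&` V !=set0.

Definition P_fam (W : set (set X)) (n : nat) (U : 'I_n -> set X) (nu : PX) :=
  forall i, P_one W (U i) nu.

Definition P_near (W : set (set X)) (mu : PX) (n : nat) (U : 'I_n -> set X)
    (eps : R) (nu : PX) : Prop :=
  VietM W nu /\ supp nu `<=` \bigcup_i U i /\
  forall i, `| fine (nu (U i)) - fine (mu (U i)) | <= eps.

Definition W1 (mu nu : PX) : \bar R :=
  ereal_inf [set c | exists pi : probability (Borel * Borel)%type R,
     (forall A : set Borel, measurable A -> pi (fst @^-1` A) = mu A) /\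
     (forall A : set Borel, measurable A -> pi (snd @^-1` A) = nu A) /\
     c = (\int[pi]_p (mdist (p.1 : X) (p.2 : X))%:E)%E].

Definition PX_convex (C : set PX) : Prop :=
  forall (nu1 nu2 nu : PX) (t : R), 0 <= t <= 1 ->
    (forall A : set Borel, measurable A ->
        nu A = (t%:E * nu1 A + (1 - t)%:E * nu2 A)%E) ->
    C nu1 -> C nu2 -> C nu.

(** Closedness in the weak topology on P(X): every point outside C has a
    basic weak neighbourhood { nu | |int f_j dnu - int f_j dmu| < e, j<k }
    (f_j continuous) disjoint from C. *)
Definition weak_closed (C : set PX) : Prop :=
  forall mu : PX, ~ C mu ->
    exists (k : nat) (f : 'I_k -> X -> R) (e : R),
      0 < e /\ (forall j, continuous (f j)) /\
      forall nu : PX,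
        (forall j, `| (\int[nu]_(y in [set: Borel]) f j y)
                      - (\int[mu]_(y in [set: Borel]) f j y) | < e) ->
        ~ C nu.

Definition Fmap (W : set (set X)) (mu : PX) (n : nat) (U : 'I_n -> set X)
    (eps : R) (zeta : PX) : set PX :=
  [set nu | P_near W mu U eps nu /\ supp nu `<=` supp zeta].

End Defs.

(* Every member of F(zeta) is finitely supported inside the finite set
   T = supp zeta `&` \bigcup_i U i, hence concentrated on T.  F(zeta) is
   non-empty: pick y_i in supp zeta `&` U_i and put mass m_i at y_i.  It is
   convex because the support of a mixture lies in the union of the supports
   and the constraints |nu(U_i) - mu(U_i)| <= eps are convex in nu.  It is
   weakly closed: a measure mu' outside F(zeta) either gives T mass < 1, and is
   separated from F(zeta) by a continuous function vanishing exactly on T, or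
   it lives on T and violates the constraint for some i; then a Urysohn
   function equal to 1 on T `&` U_i and 0 on T `\` U_i integrates to nu(U_i)
   against every nu concentrated on T. *)

From HB Require Import structures.
From mathcomp Require Import all_boot all_order all_algebra.
From mathcomp Require Import all_classical all_reals all_analysis.
From mathcomp Require Import ring lra.
Import Order.TTheory GRing.Theory Num.Theory.
Import numFieldNormedType.Exports.
Local Open Scope classical_set_scope.
Local Open Scope ring_scope.

Set Implicit Arguments.
Unset Strict Implicit.
Unset Printing Implicit Defensive.

Section Borel.
Context {R : realType} {X : pmetricType R}.
Local Notation B := (@Borel R X).

Lemma open_measurableB (A : set X) : open A -> measurable (A : set B).
Proof. exact: sub_sigma_algebra. Qed.

Lemma closed_measurableB (A : set X) : closed A -> measurable (A : set B).
Proof.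
move=> cA; rewrite -(setCK A); apply: measurableC.
by apply: open_measurableB; apply: closed_openC.
Qed.

Lemma finite_set_closed (A : set X) : finite_set A -> closed A.
Proof.
by apply: (accessible_finite_set_closed).1; apply/hausdorff_accessible/metric_hausdorff.
Qed.

Lemma finite_measurableB (A : set X) : finite_set A -> measurable (A : set B).
Proof. by move=> /finite_set_closed; apply: closed_measurableB. Qed.

Lemma continuous_measurableB (f : X -> R) :
  continuous f -> measurable_fun setT (f : B -> R).
Proof.
move=> cf; apply: (measurability _ (measurable_realfun.RGenOpens.measurableE R)).
move=> _ [_ [a [b ->] <-]]; rewrite setTI; apply: open_measurableB.
exact: (continuousP f).1 cf _ (interval_open _ _).
Qed.

Lemma continuous_mdist (s : X) : continuous (fun y : X => mdist y s).
Proof.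
move=> y0; apply/cvgrPdist_lt => e e0.
have : \forall y \near y0, ball y0 e y by apply: nbhsx_ballx.
apply: filterS => y; rewrite ballEmdist /= => y0y.
have := metric_triangle y0 y s; have := metric_triangle y y0 s.
rewrite (metric_sym y y0) ltr_norml; lra.
Qed.

End Borel.

Section Support.
Context {R : realType} {X : pmetricType R}.
Local Notation B := (@Borel R X).
Implicit Types nu : @PX R X.

Lemma probability_fineK nu (A : set B) : measurable A -> nu A = (fine (nu A))%:E.
Proof. by move=> mA; rewrite fineK // fin_num_measure. Qed.

Lemma not_supp_open_null nu (y : X) : ~ supp nu y ->
  exists V : set X, [/\ open V, V y & nu V = 0%E].
Proof.
move=> /existsNP[V] /not_implyP[oV] /not_implyP[Vy] /negP; rewrite -leNgt => nV0.
by exists V; split => //; apply/eqP; rewrite eq_le nV0 measure_ge0.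
Qed.

Lemma supp_mixture nu1 nu2 nu (t : R) :
  (forall A : set B, measurable A ->
     nu A = (t%:E * nu1 A + (1 - t)%:E * nu2 A)%E) ->
  supp nu `<=` supp nu1 `|` supp nu2.
Proof.
move=> nuE y nuy; apply: contrapT => /not_orP[/not_supp_open_null[V1 [oV1 V1y nV1]]].
move=> /not_supp_open_null[V2 [oV2 V2y nV2]].
have mV1 := open_measurableB oV1; have mV2 := open_measurableB oV2.
have mV := measurableI _ _ mV1 mV2.
have nu1V : nu1 (V1 `&` V2) = 0%E by apply: subset_measure0 nV1 => //; apply: subIsetl.
have nu2V : nu2 (V1 `&` V2) = 0%E by apply: subset_measure0 nV2 => //; apply: subIsetr.
have := nuy _ (openI oV1 oV2) (conj V1y V2y).
by rewrite nuE // nu1V nu2V !mule0 adde0 ltxx.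
Qed.

Lemma supp_sub_full nu (S : set X) : finite_set S -> nu S = 1%E -> supp nu `<=` S.
Proof.
move=> fS nS y nuy; apply: contrapT => Sy.
have := nuy (~` S) (closed_openC (finite_set_closed fS)) Sy.
by rewrite probability_setC ?nS ?subee ?ltxx //; apply: finite_measurableB.
Qed.

Lemma null_finite_outside_supp nu (S : set X) : finite_set S ->
  (forall y, S y -> ~ supp nu y) -> nu S = 0%E.
Proof.
move=> fS Snu; have -> : S = \bigcup_(y in S) [set y].
  by apply/seteqP; split => [y Sy|y [z Sz ->//]]; exists y.
rewrite measure_fin_bigcup //.
- apply: fsbig1 => y /Snu /not_supp_open_null[V [oV Vy nV]].
  apply: subset_measure0 nV => //; last by move=> z ->.
  + exact: finite_measurableB (finite_set1 y).
  + exact: open_measurableB.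
- by move=> y z _ _ [u [-> ->]].
- by move=> y _; exact: finite_measurableB (finite_set1 y).
Qed.

Lemma full_of_supp_sub nu (S T : set X) : finite_set S -> nu S = 1%E ->
  finite_set T -> supp nu `<=` T -> nu T = 1%E.
Proof.
move=> fS nS fT nuT.
have fST : finite_set (S `\` T) by apply: sub_finite_set fS; apply: subDsetl.
have nST : nu (S `\` T) = 0%E by apply: null_finite_outside_supp => // y [_ Ty] /nuT.
have [mT mST] := (finite_measurableB fT, finite_measurableB fST).
have nS_le : (nu S <= nu (T `|` (S `\` T)))%E.
  apply: le_measure; rewrite ?inE; first exact: finite_measurableB.
  - exact: measurableU.
  - by move=> y Sy; have [Ty|nTy] := pselect (T y); [left|right].
apply/eqP; rewrite eq_le probability_le1 //= -nS.
apply: le_trans nS_le (le_trans (measureU2 nu mT mST) _).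
by rewrite [X in (_ + X <= _)%E]nST adde0.
Qed.

End Support.

Section DiracMixture.
Context {R : realType} {X : pmetricType R}.
Local Notation B := (@Borel R X).
Variables (n : nat) (y : 'I_n -> X) (m : 'I_n -> R).
Hypothesis m_ge0 : forall i, 0 <= m i.
Hypothesis m_sum1 : \sum_(i < n) m i = 1.

Definition dirac_mix (A : set B) : \bar R :=
  (\sum_(i < n) mscale (NngNum (m_ge0 i)) (@dirac _ B (y i) R) A)%E.

Let dirac_mix0 : dirac_mix set0 = 0%E.
Proof. by rewrite /dirac_mix big1 // => i _; rewrite measure0. Qed.

Let dirac_mix_ge0 A : (0 <= dirac_mix A)%E.
Proof. by apply: sume_ge0 => i _; apply: measure_ge0. Qed.

Let dirac_mix_sigma_additive : semi_sigma_additive dirac_mix.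
Proof.
move=> F mF tF mUF; rewrite [X in _ --> X](_ : _ =
    lim ((fun k => (\sum_(0 <= i < k) dirac_mix (F i))%E) @ \oo)).
  by apply: is_cvg_ereal_nneg_natsum => k _; exact: dirac_mix_ge0.
rewrite nneseries_sum //; apply: eq_bigr => /= i _.
exact: measure_semi_bigcup.
Qed.

HB.instance Definition _ := isMeasure.Build _ _ _ dirac_mix
  dirac_mix0 dirac_mix_ge0 dirac_mix_sigma_additive.

Let dirac_mixE A : dirac_mix A = (\sum_(i < n | y i \in A) m i)%:E.
Proof.
rewrite /dirac_mix -sumEFin [in RHS]big_mkcond /=; apply: eq_bigr => i _.
by rewrite /mscale /= diracE; case: (y i \in A); rewrite ?mule1 ?mule0.
Qed.

Let dirac_mix_setT : dirac_mix [set: B] = 1%E.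
Proof.
by rewrite dirac_mixE; under eq_bigl do rewrite in_setT; rewrite m_sum1.
Qed.

HB.instance Definition _ :=
  @Measure_isProbability.Build _ _ R dirac_mix dirac_mix_setT.

Definition dirac_mix_prob : @PX R X := dirac_mix.

Lemma dirac_mix_probE A : dirac_mix_prob A = (\sum_(i < n | y i \in A) m i)%:E.
Proof. exact: dirac_mixE. Qed.

End DiracMixture.

Lemma big_mem_disjoint {T : Type} {R : nmodType} n (U : 'I_n -> set T)
    (z : 'I_n -> T) (m : 'I_n -> R) :
  (forall i j, i != j -> U i `&` U j = set0) -> (forall i, U i (z i)) ->
  forall i, \sum_(j < n | z j \in U i) m j = m i.
Proof.
move=> dU zU i; rewrite (bigD1 i) /= ?inE // big1 ?addr0 // => j /andP[+ ji].
rewrite inE => Uzj; have := dU i j; rewrite eq_sym ji => /(_ isT) /seteqP[+ _].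
by move/(_ (z j) (conj Uzj (zU j))).
Qed.

Section Integrals.
Context {R : realType} {X : pmetricType R}.
Local Notation B := (@Borel R X).
Implicit Types nu : @PX R X.

Lemma Rintegral_eq_on_full nu (T : set X) (f g : X -> R) :
  measurable (T : set B) -> nu T = 1%E ->
  measurable_fun setT (f : B -> R) -> measurable_fun setT (g : B -> R) ->
  (forall t, T t -> f t = g t) ->
  \int[nu]_(y in [set: B]) f y = \int[nu]_(y in [set: B]) g y.
Proof.
move=> mT nT mf mg fg; congr fine; apply: ae_eq_integral => //.
- exact/measurable_realfun.measurable_EFinP.
- exact/measurable_realfun.measurable_EFinP.
exists (~` T); split; first exact: measurableC.
  by apply: etrans (probability_setC nu mT) _; rewrite nT subee.
by move=> z /= nfg Tz; apply: nfg => _; rewrite fg.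
Qed.

Lemma Rintegral_indic nu (V : set X) : measurable (V : set B) ->
  \int[nu]_(y in [set: B]) (\1_V y : R) = fine (nu V).
Proof. by move=> mV; rewrite /Rintegral integral_indic // setIT. Qed.

Lemma Rintegral_gt0_off_full nu (T : set X) (h : X -> R) :
  measurable (T : set B) -> nu T <> 1%E -> continuous h ->
  (forall y, 0 <= h y <= 1) -> (forall y, ~ T y -> 0 < h y) ->
  0 < \int[nu]_(y in [set: B]) h y.
Proof.
move=> mT nT ch h01 hpos.
have mh := (measurable_realfun.measurable_EFinP _ _).2 (continuous_measurableB ch).
have h_ge0 y : (0 <= (h y)%:E)%E by rewrite lee_fin; case/andP: (h01 y).
have I_ge0 : (0 <= \int[nu]_(y in [set: B]) (h y)%:E)%E by apply: integral_ge0.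
have I_fin : (\int[nu]_(y in [set: B]) (h y)%:E <= 1)%E.
  rewrite -[leRHS](probability_setT nu) -[leRHS]mul1e -integral_cst //.
  by apply: ge0_le_integral => // y _; rewrite lee_fin; case/andP: (h01 y).
rewrite /Rintegral lt_neqAle fine_ge0 // andbT; apply/eqP => I0.
have /(ae_eq_integral_abs nu measurableT mh)[N [mN N0 hN]] :
    (\int[nu]_(y in [set: B]) `|(h y)%:E|)%E = 0%E.
  under eq_integral do rewrite gee0_abs //.
  by move: I_ge0 I_fin I0; case: (\int[nu]_(y in _) _)%E => //= r _ _ <-.
have nTN : (nu (~` T) <= nu N)%E.
  apply: le_measure; rewrite ?inE //; first exact: measurableC.
  move=> z nTz; apply: hN => /= /(_ Logic.I) /eqP; rewrite eqe => /eqP hz0.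
  by have := hpos z nTz; rewrite hz0 ltxx.
apply: nT; apply/eqP; rewrite eq_le probability_le1 //=.
move: nTN; rewrite N0 probability_setC //.
move: (probability_le1 nu mT) (measure_ge0 nu T).
by case: (nu T) => // r; rewrite -EFinB !lee_fin => *; lra.
Qed.

End Integrals.

Section Separation.
Context {R : realType} {X : pmetricType R}.
Local Notation B := (@Borel R X).
Implicit Types nu : @PX R X.

Definition dist1_prod (ts : seq X) (y : X) : R :=
  \prod_(s <- ts) Num.min 1 (mdist y s).

Lemma continuous_dist1_prod ts : continuous (dist1_prod ts).
Proof.
elim: ts => [|a ts IH].
  have -> : dist1_prod [::] = cst 1 by apply/funext => y; rewrite /dist1_prod big_nil.
  exact: cst_continuous.
have -> : dist1_prod (a :: ts) = (fun y => Num.min 1 (mdist y a)) \* dist1_prod ts.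
  by apply/funext => y; rewrite /dist1_prod big_cons.
move=> y; apply: continuousM (IH y).
have := @min_fun_continuous _ X R (fun=> 1) _ (@cst_continuous X R 1)
  (continuous_mdist (s:=a)).
by move/(_ y).
Qed.

Lemma dist1_prod_itv ts y : 0 <= dist1_prod ts y <= 1.
Proof.
apply/andP; split; first by apply: prodr_ge0 => s _; rewrite le_min ler01 mdist_ge0.
by apply: prodr_ile1 => s _; rewrite le_min ler01 mdist_ge0 ge_min lexx.
Qed.

Lemma dist1_prod_eq0 ts t : t \in ts -> dist1_prod ts t = 0.
Proof.
move=> tts; rewrite /dist1_prod (big_rem t) //= mdistxx.
by rewrite (@min_r _ _ 1 0) ?ler01 // mul0r.
Qed.

Lemma dist1_prod_gt0 ts y : y \notin ts -> 0 < dist1_prod ts y.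
Proof.
move=> yts; rewrite /dist1_prod big_seq; apply: prodr_gt0 => s sts.
by rewrite lt_min ltr01 mdist_gt0; apply: contraNneq yts => ->.
Qed.

Lemma weak_separate_full (T : set X) : finite_set T ->
  exists h : X -> R, [/\ continuous h,
    forall nu, nu T = 1%E -> \int[nu]_(y in [set: B]) h y = 0 &
    forall nu, nu T <> 1%E -> 0 < \int[nu]_(y in [set: B]) h y].
Proof.
move=> fT; have mT := finite_measurableB fT.
have [ts Tts] := (finite_seqP _).1 fT.
exists (dist1_prod ts); split => [|nu nT|nu nT].
- exact: continuous_dist1_prod.
- rewrite (@Rintegral_eq_on_full _ _ nu T _ (cst 0) mT nT) ?Rintegral_cst ?mul0r //.
  + by apply: continuous_measurableB; apply: continuous_dist1_prod.
  + by move=> t; rewrite Tts; apply: dist1_prod_eq0.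
- apply: Rintegral_gt0_off_full mT nT (@continuous_dist1_prod ts) _ _.
    exact: dist1_prod_itv.
  by move=> y; rewrite Tts => /negP; apply: dist1_prod_gt0.
Qed.

Lemma weak_mass_on_finite (T V : set X) : finite_set T -> open V ->
  exists g : X -> R, continuous g /\
    forall nu, nu T = 1%E -> \int[nu]_(y in [set: B]) g y = fine (nu V).
Proof.
move=> fT oV; have mT := finite_measurableB fT; have mV := open_measurableB oV.
have finite_closed (A : set X) : A `<=` T -> closed A.
  by move=> AT; apply: finite_set_closed; apply: sub_finite_set AT fT.
have dTV : (T `\` V) `&` (T `&` V) = set0.
  by apply/seteqP; split => z // [[_ nVz] [_ Vz]].
have [g [cg gTV gTnV _]] := @urysohn_ext_itv X R (@pseudometric_normal R X) _ _
  0 1 (finite_closed _ (@subDsetl _ T V)) (finite_closed _ (@subIsetl _ T V)) dTV ltr01.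
exists g; split => // nu nT; rewrite -Rintegral_indic //.
apply: (Rintegral_eq_on_full mT nT).
- exact: continuous_measurableB.
- exact: measurable_realfun.measurable_indic.
move=> t Tt; rewrite indicE; have [Vt|nVt] := pselect (V t).
- by rewrite mem_set //; apply: gTnV; exists t.
- by rewrite memNset //; apply: gTV; exists t.
Qed.

End Separation.

Section Fmap.
Context {R : realType} {X : pmetricType R}.
Local Notation B := (@Borel R X).
Variables (W : set (set X)) (mu : @PX R X) (n : nat) (U : 'I_n -> set X).
Variable eps : R.
Hypothesis U_open : forall i, open (U i).
Hypothesis U_in_W : exists A, W A /\ \bigcup_i U i `<=` A.

Lemma VietM_finite_supp (nu : @PX R X) : VietM W nu -> finite_set (supp nu).
Proof. by move=> [[S [fS nS]] _]; apply: sub_finite_set (supp_sub_full fS nS) fS. Qed.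

Lemma P_nearI (nu : @PX R X) (S : set X) :
  finite_set S -> nu S = 1%E -> supp nu `<=` \bigcup_i U i ->
  (forall i, `| fine (nu (U i)) - fine (mu (U i)) | <= eps) ->
  P_near W mu U eps nu.
Proof.
move=> fS nS suppU nearU; have [A [WA UA]] := U_in_W.
by split; [split; [exists S|exists A; split => // y /suppU /UA]|].
Qed.

Variable zeta : @PX R X.
Let T := supp zeta `&` \bigcup_i U i.

Lemma Fmap_full (nu : @PX R X) : VietM W zeta ->
  Fmap W mu U eps zeta nu -> nu T = 1%E.
Proof.
move=> /VietM_finite_supp fsupp [[[[S [fS nS]] _] [suppU _]] suppz].
apply: (full_of_supp_sub fS nS); first by apply: sub_finite_set fsupp => y [].
by move=> y nuy; split; [exact: suppz|exact: suppU].
Qed.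

Lemma Fmap_nonempty (m : 'I_n -> R) :
  (forall i, 0 <= m i) -> \sum_(i < n) m i = 1 ->
  (forall i, mu (U i) = (m i)%:E) ->
  (forall i j, i != j -> U i `&` U j = set0) ->
  0 <= eps -> P_fam W U zeta ->
  Fmap W mu U eps zeta !=set0.
Proof.
move=> m_ge0 m_sum1 muU dU eps_ge0 zetaU.
have [y yU] := choice (fun i => (zetaU i).2).
pose S : set X := [set` map y (enum 'I_n)].
have yS i : y i \in S by apply/mem_set/mapP; exists i; rewrite ?mem_enum.
pose nu := dirac_mix_prob y m_ge0 m_sum1.
have nuU i : nu (U i) = (m i)%:E.
  by rewrite /nu dirac_mix_probE (big_mem_disjoint m dU (fun i => (yU i).2)).
have nuS : nu S = 1%E.
  by rewrite /nu dirac_mix_probE; under eq_bigl do rewrite yS; rewrite m_sum1.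
have suppS := supp_sub_full (finite_seq _) nuS.
exists nu; split; last by move=> _ /suppS /mapP[i _ ->]; exact: (yU i).1.
apply: (P_nearI (finite_seq _) nuS).
  by move=> _ /suppS /mapP[i _ ->]; exists i => //; exact: (yU i).2.
by move=> i; rewrite nuU muU subrr normr0.
Qed.

Lemma Fmap_convex : PX_convex (Fmap W mu U eps zeta).
Proof.
move=> nu1 nu2 nu t /andP[t_ge0 t_le1] nuE.
move=> [[[[S1 [fS1 nS1]] _] [suppU1 near1]] suppz1].
move=> [[[[S2 [fS2 nS2]] _] [suppU2 near2]] suppz2].
have suppnu := supp_mixture nuE.
have fS : finite_set (S1 `|` S2) by rewrite finite_setU.
have sub1 : supp nu1 `<=` S1 `|` S2 by move=> y /(supp_sub_full fS1 nS1); left.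
have sub2 : supp nu2 `<=` S1 `|` S2 by move=> y /(supp_sub_full fS2 nS2); right.
split; last by move=> y /suppnu[/suppz1|/suppz2].
apply: (P_nearI fS).
- rewrite nuE; last exact: finite_measurableB.
  rewrite (full_of_supp_sub fS1 nS1 fS sub1) (full_of_supp_sub fS2 nS2 fS sub2).
  by rewrite -!EFinM !mulr1 -EFinD subrKC.
- by move=> y /suppnu[/suppU1|/suppU2].
move=> i; have mU := open_measurableB (U_open i).
rewrite nuE // (probability_fineK nu1 mU) (probability_fineK nu2 mU) -!EFinM -EFinD /=.
have := near1 i; have := near2 i.
set a1 := fine (nu1 (U i)); set a2 := fine (nu2 (U i)); set b := fine (mu (U i)).
move=> near2i near1i.
have -> : t * a1 + (1 - t) * a2 - b = t * (a1 - b) + (1 - t) * (a2 - b) by ring.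
apply: le_trans (ler_normD _ _) _.
rewrite !normrM (ger0_norm t_ge0) (@ger0_norm _ (1 - t)) ?subr_ge0 //; nra.
Qed.

Lemma Fmap_weak_closed : VietM W zeta -> weak_closed (Fmap W mu U eps zeta).
Proof.
move=> zetaW mu' mu'F.
have fT : finite_set T by apply: sub_finite_set (VietM_finite_supp zetaW) => y [].
have FT nu := @Fmap_full nu zetaW.
have [mu'T|mu'T] := pselect (mu' T = 1%E); last first.
  have [h [ch hT hnT]] := weak_separate_full fT.
  exists 1%N, (fun=> h), (\int[mu']_(y in [set: B]) h y); split; first exact: hnT.
  split=> // nu + /FT nuT; rewrite hT // sub0r normrN gtr0_norm ?hnT //.
  by move=> /(_ ord0); rewrite ltxx.
have [i far_i] : exists i, eps < `|fine (mu' (U i)) - fine (mu (U i))|.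
  apply: contrapT => near; apply: mu'F.
  have suppT := supp_sub_full fT mu'T.
  split; last by move=> y /suppT[].
  apply: (P_nearI fT mu'T); first by move=> y /suppT[].
  by move=> i; rewrite leNgt; apply/negP => far; apply: near; exists i.
have [g [cg gE]] := weak_mass_on_finite fT (U_open i).
set a := fine (mu' (U i)); set b := fine (mu (U i)).
exists 1%N, (fun=> g), (`|a - b| - eps); split; first by rewrite subr_gt0.
split=> // nu /(_ ord0) + Fnu; rewrite (gE nu (FT nu Fnu)) (gE mu' mu'T) -/a.
have [[_ [_ /(_ i) near_b]] _] := Fnu; move: near_b.
set c := fine (nu (U i)); rewrite -/b => near_b near_a.
have := ler_normD (a - c) (c - b); rewrite addrA subrK (distrC a c); lra.
Qed.

End Fmap.

Unset Implicit Arguments.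
Set Strict Implicit.

Theorem proposition4p8 (R : realType) (X : pmetricType R)
    (W : set (set X)) (n : nat) (x : 'I_n -> X) (m : 'I_n -> R)
    (mu : @PX R X) (U : 'I_n -> set X) (eps r : R) :
  compact [set: X] ->
  (forall A, W A -> open A) ->
  (forall y : X, exists A, W A /\ A y) ->
  (exists M : R, forall A, W A -> forall y z, A y -> A z -> mdist y z <= M) ->
  injective x -> (forall i, 0 < m i) ->
  (forall A : set (@Borel R X), measurable A ->
     mu A = (\sum_(i < n | x i \in A) m i)%:E) ->
  VietM W mu ->
  (forall i, open (U i)) ->
  (forall i j, i != j -> U i `&` U j = set0) ->
  (forall i, U i (x i)) ->
  (exists A, W A /\ \bigcup_i U i `<=` A) ->
  0 < eps -> 0 < r ->
  forall zeta : @PX R X,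
    P_fam W U zeta -> VietM W zeta -> (W1 zeta mu < r%:E)%E ->
    Fmap W mu U eps zeta !=set0 /\
    PX_convex (Fmap W mu U eps zeta) /\
    weak_closed (Fmap W mu U eps zeta).
Proof.
move=> _ _ _ _ _ m_gt0 muE _ U_open dU xU U_in_W eps_gt0 _ zeta zetaU zetaW _.
have m_sum1 : \sum_(i < n) m i = 1.
  have := muE setT measurableT; rewrite probability_setT => -[] /esym.
  by under eq_bigl do rewrite in_setT.
have muU i : mu (U i) = (m i)%:E.
  by rewrite muE ?(big_mem_disjoint m dU xU) //; apply: open_measurableB.
have m_ge0 i : 0 <= m i := ltW (m_gt0 i).
split; first by apply: Fmap_nonempty m_ge0 m_sum1 muU dU (ltW eps_gt0) zetaU.
by split; [apply: Fmap_convex | apply: Fmap_weak_closed].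
Qed.
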